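(* Let $(E,\mathcal{P})$ be a random locally convex module over $K$ with base $(\Omega,\mathcal{F},P)$, endowed with its $(\varepsilon,\lambda)$-topology, and let $G$ be a nonempty $L^0$-convex subset of $E$. If $G$ is $L^0$-convexly compact, then $G$ has the countable concatenation property: for every sequence $\{g_n\}_{n\in\mathbb{N}}$ in $G$ and every countable partition $\{A_n\}_{n\in\mathbb{N}}$ of $\Omega$ into sets in $\mathcal{F}$, there exists $g\in G$ with $\tilde I_{A_n}g=\tilde I_{A_n}g_n$ for all $n$.
   Context: $(\Omega,\mathcal{F},P)$ is a probability space, $K=\mathbb{R}$ or $\mathbb{C}$, $L^0(\mathcal{F},K)$ is the algebra of equivalence classes (modulo $P$-a.s. equality) of $K$-valued $\mathcal{F}$-measurable random variables, $L^0=L^0(\mathcal{F},\mathbb{R})$, $L^0_+=\{\xi\in L^0:\xi\ge0\}$; $\tilde I_A$ denotes the class of the indicator of $A\in\mathcal{F}$. An $L^0$-seminorm on an $L^0(\mathcal{F},K)$-module $E$ is a map $\|\cdot\|:E\to L^0_+$ with $\|\xi x\|=|\xi|\|x\|$ and $\|x+y\|\le\|x\|+\|y\|$. A random locally convex module $(E,\mathcal{P})$ is an $L^0(\mathcal{F},K)$-module $E$ with a family $\mathcal{P}$ of $L^0$-seminorms such that $\bigvee\{\|x\|:\|\cdot\|\in\mathcal{P}\}=0$ iff $x=\theta$. For finite nonempty $\mathcal{Q}\subset\mathcal{P}$ let $\|x\|_{\mathcal{Q}}=\bigvee_{\|\cdot\|\in\mathcal{Q}}\|x\|$; the $(\varepsilon,\lambda)$-topology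 on $E$ has local base at $\theta$ the sets $\{x: P\{\|x\|_{\mathcal{Q}}<\varepsilon\}>1-\lambda\}$ ($\mathcal{Q}$ finite nonempty, $\varepsilon>0$, $0<\lambda<1$). $G\subset E$ is $L^0$-convex if $\xi x+(1-\xi)y\in G$ for all $x,y\in G$, $\xi\in L^0$, $0\le\xi\le1$. An $L^0$-convex set $G$ is $L^0$-convexly compact if every family of $L^0$-convex subsets of $G$ which are closed (in the relative topology of $G$) and which has the finite intersection property has nonempty intersection. *)

From HB Require Import structures.
From mathcomp Require Import all_boot all_order all_algebra.
From mathcomp Require Import all_classical all_reals.
From mathcomp Require Import topology normedtype sequences numfun measure
  lebesgue_measure probability.
From mathcomp Require complex.
Import complex.

Set Implicit Arguments.
Unset Strict Implicit.
Unset Printing Implicit Defensive.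
Import Order.TTheory GRing.Theory Num.Theory.
Local Open Scope classical_set_scope.
Local Open Scope ring_scope.

Inductive scalar_field := Kreal | Kcomplex.

Section L0.
Context {d : measure_display} {Omega : measurableType d} {R : realType}.
Variable P : probability Omega R.

Definition aeq {T : Type} (f g : Omega -> T) : Prop :=
  {ae P, forall w, f w = g w}.

Definition cmod (z : R[i]) : R := Num.sqrt (complex.Re z ^+ 2 + complex.Im z ^+ 2).

(* xi : Omega -> R[i] is a representative of an element of L^0(F, K) *)
Definition L0K (K : scalar_field) (xi : Omega -> R[i]) : Prop :=
  [/\ measurable_fun setT (fun w => complex.Re (xi w)),
      measurable_fun setT (fun w => complex.Im (xi w)) &
      (K = Kreal -> forall w, complex.Im (xi w) = 0)].

Definition cst_C (xi : Omega -> R) : Omega -> R[i] := fun w => ((xi w)%:C)%C.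

(* E (with zero, addition, opposite and an action smul of representatives of
   L^0(F,K)) is an L^0(F,K)-module: an abelian group, module axioms for the
   pointwise ring of K-valued measurable functions, and the action only
   depends on the P-a.s. class of the scalar. *)
Definition is_L0module (K : scalar_field) (E : Type) (zero : E)
    (add : E -> E -> E) (opp : E -> E) (smul : (Omega -> R[i]) -> E -> E) :=
  [/\ (forall x y z, add x (add y z) = add (add x y) z),
      (forall x y, add x y = add y x),
      (forall x, add zero x = x) &
      (forall x, add x (opp x) = zero)] /\
  [/\ (forall xi x y, L0K K xi ->
          smul xi (add x y) = add (smul xi x) (smul xi y)),
      (forall xi eta x, L0K K xi -> L0K K eta ->
          smul (fun w => xi w + eta w) x = add (smul xi x) (smul eta x)),
      (forall xi eta x, L0K K xi -> L0K K eta ->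
          smul (fun w => xi w * eta w) x = smul xi (smul eta x)),
      (forall x, smul (fun _ => 1) x = x) &
      (forall xi eta x, L0K K xi -> L0K K eta -> aeq xi eta ->
          smul xi x = smul eta x)].

(* an L^0-seminorm, given by a choice of representatives nrm x of the
   L^0_+ - valued norm of x *)
Definition is_L0seminorm (K : scalar_field) (E : Type) (add : E -> E -> E)
    (smul : (Omega -> R[i]) -> E -> E) (nrm : E -> Omega -> R) :=
  [/\ (forall x, measurable_fun setT (nrm x)),
      (forall x, {ae P, forall w, 0 <= nrm x w}),
      (forall xi x, L0K K xi ->
          aeq (nrm (smul xi x)) (fun w => cmod (xi w) * nrm x w)) &
      (forall x y, {ae P, forall w, nrm (add x y) w <= nrm x w + nrm y w})].

(* (E, Pf) is a random locally convex module: Pf is a family of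
   L^0-seminorms with  \/ {||x|| : ||.|| in Pf} = 0  iff  x = zero.
   Since all ||x|| are >= 0, the essential supremum of the family vanishes
   iff every member vanishes P-a.s. *)
Definition is_RLCmodule (K : scalar_field) (E : Type) (zero : E)
    (add : E -> E -> E) (opp : E -> E) (smul : (Omega -> R[i]) -> E -> E)
    (Pf : set (E -> Omega -> R)) :=
  [/\ is_L0module K zero add opp smul,
      (forall nrm, Pf nrm -> is_L0seminorm K add smul nrm) &
      (forall x, (forall nrm, Pf nrm -> aeq (nrm x) (fun _ => 0)) <-> x = zero)].

Section Topology.
Variables (E : Type) (add : E -> E -> E) (opp : E -> E)
  (smul : (Omega -> R[i]) -> E -> E) (Pf : set (E -> Omega -> R)).

Definition normQ (Q : seq (E -> Omega -> R)) (x : E) : Omega -> R :=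
  fun w => \big[Num.max/0]_(nrm <- Q) nrm x w.

Definition Ubase (Q : seq (E -> Omega -> R)) (eps lam : R) : set E :=
  [set x | ((1 - lam)%:E < P [set w | (normQ Q x w < eps)%R])%E].

Definition is_Ubase (U : set E) : Prop :=
  exists Q eps lam, [/\ Q != [::], (forall nrm, nrm \in Q -> Pf nrm),
      0 < eps & 0 < lam < 1] /\ U = Ubase Q eps lam.

(* open sets of the (eps,lambda)-topology (a linear topology with local
   base Ubase at theta) *)
Definition el_open (O : set E) : Prop :=
  forall x, O x -> exists U, is_Ubase U /\
    (forall y, U (add y (opp x)) -> O y).

Definition el_closed (C : set E) : Prop := el_open (~` C).

Definition rel_closed (G F : set E) : Prop :=
  exists C, el_closed C /\ F = C `&` G.

Definition L0convex (G : set E) : Prop :=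
  forall x y, G x -> G y -> forall xi : Omega -> R, measurable_fun setT xi ->
    {ae P, forall w, 0 <= xi w <= 1} ->
    G (add (smul (cst_C xi) x) (smul (cst_C (fun w => 1 - xi w)) y)).

Definition L0convexly_compact (G : set E) : Prop :=
  L0convex G /\
  forall (Fam : set (set E)),
    (forall F, Fam F -> [/\ F `<=` G, L0convex F & rel_closed G F]) ->
    (forall s : seq (set E), (forall F, F \in s -> Fam F) ->
        exists x, forall F, F \in s -> F x) ->
    exists x, G x /\ forall F, Fam F -> F x.

Definition countable_concatenation (G : set E) : Prop :=
  forall (g : nat -> E), (forall n, G (g n)) ->
  forall (A : nat -> set Omega), (forall n, measurable (A n)) ->
    trivIset setT A -> \bigcup_n A n = setT ->
    exists g0, G g0 /\
      forall n, smul (cst_C \1_(A n)) g0 = smul (cst_C \1_(A n)) (g n).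

End Topology.
End L0.

(* For each n the set C_n of those x with 1_{A_n} x = 1_{A_n} g_n is closed:
   if 1_A x <> c, some seminorm of w = c - 1_A x exceeds a level eps on a set
   of positive probability delta; a y with 1_A y = c satisfies
   ||y - x|| >= ||1_A (y - x)|| = ||w|| a.s., so ||y - x|| < eps has
   probability at most 1 - delta, and y lies outside the (eps, delta/2)
   neighbourhood of x.  Each C_n meets G in an L^0-convex set, and finitely
   many C_n meet inside G, because pasting a point x of G with g_N along A_N
   is the L^0-convex combination 1_{A_N^c} x + 1_{A_N} g_N.  L^0-convex
   compactness then gives a point of G in every C_n. *)

From HB Require Import structures.
From mathcomp Require Import all_boot all_order all_algebra.
From mathcomp Require Import all_classical all_reals.
From mathcomp Require Import topology normedtype sequences numfun measure
  lebesgue_measure probability measurable_realfun.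
From mathcomp Require Import lra.
From mathcomp Require complex.
Import complex.

Set Implicit Arguments.
Unset Strict Implicit.
Unset Printing Implicit Defensive.
Import Order.TTheory GRing.Theory Num.Theory.
Local Open Scope classical_set_scope.
Local Open Scope ring_scope.

Section probability_levels.
Context {d : measure_display} {Omega : measurableType d} {R : realType}.
Variable P : probability Omega R.

Lemma measurable_ltr (f g : Omega -> R) :
  measurable_fun setT f -> measurable_fun setT g ->
  measurable [set w | f w < g w].
Proof.
move=> mf mg; have := measurable_fun_ltr mf mg measurableT.
by move=> /(_ [set true] I); rewrite setTI.
Qed.

Lemma exists_level_measure_gt0 (f : Omega -> R) : measurable_fun setT f ->
  {ae P, forall w, 0 <= f w} -> ~ aeq P f (fun _ => 0) ->
  exists2 eps : R, 0 < eps & (0 < P [set w | (eps < f w)%R])%E.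
Proof.
move=> mf f_ge0 f_neq0; apply: contrapT => no_level; apply: f_neq0.
have level0 (m : nat) : P [set w | m.+1%:R^-1 < f w] = 0%E.
  apply/eqP; rewrite eq_le measure_ge0 andbT leNgt; apply/negP => Pm_gt0.
  by apply: no_level; exists m.+1%:R^-1; rewrite ?invr_gt0.
apply: (@negligibleS _ _ _ _
  (~` [set w | 0 <= f w] `|` \bigcup_m [set w | m.+1%:R^-1 < f w])).
  move=> w /= fw_neq0; have [fw_ge0|] := pselect (0 <= f w); last by left.
  have /ltr_add_invr[m] : 0 < f w.
    by rewrite lt_neqAle fw_ge0 andbT eq_sym; apply/eqP.
  by rewrite add0r => fw_gt; right; exists m.
apply: negligibleU => //; apply: negligible_bigcup => m.
exists [set w | m.+1%:R^-1 < f w]; split => //; last exact: level0.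
exact: measurable_ltr (measurable_cst _) mf.
Qed.

Lemma measure_ltr_le_compl (f g : Omega -> R) (eps : R) :
  measurable_fun setT f -> measurable_fun setT g ->
  {ae P, forall w, f w <= g w} ->
  (P [set w | (g w < eps)%R] <= 1 - P [set w | (eps < f w)%R])%E.
Proof.
move=> mf mg [N [mN PN0 le_fg_N]].
have mS : measurable [set w | eps < f w] := measurable_ltr (measurable_cst _) mf.
have mS' : measurable (~` [set w | eps < f w]) := measurableC mS.
rewrite -probability_setC // -(measureU0 mS' mN PN0).
apply: le_measure; rewrite ?inE //.
- exact: measurable_ltr mg (measurable_cst _).
- exact: measurableU.
move=> w /= gw_lt; have [fg|fg] := pselect (f w <= g w).
  by left => /lt_le_trans/(_ fg)/lt_trans/(_ gw_lt); rewrite ltxx.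
by right; apply: le_fg_N.
Qed.

End probability_levels.

Section L0module.
Context {d : measure_display} {Omega : measurableType d} {R : realType}.
Variable P : probability Omega R.
Variables (K : scalar_field) (E : Type) (zero : E) (add : E -> E -> E)
  (opp : E -> E) (smul : (Omega -> R[i]) -> E -> E).

Definition L0comb (xi : Omega -> R) (x y : E) : E :=
  add (smul (cst_C xi) x) (smul (cst_C (fun w => 1 - xi w)) y).

Lemma L0K_cst_C (f : Omega -> R) : measurable_fun setT f -> L0K K (cst_C f).
Proof. by move=> mf; split => //; exact: measurable_cst. Qed.

Hypothesis HM : is_L0module P K zero add opp smul.

Let addA : forall x y z, add x (add y z) = add (add x y) z.
Proof. by case: HM => -[]. Qed.
Let addC : forall x y, add x y = add y x.
Proof. by case: HM => -[]. Qed.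
Let add0x : forall x, add zero x = x.
Proof. by case: HM => -[]. Qed.
Let addxN : forall x, add x (opp x) = zero.
Proof. by case: HM => -[]. Qed.
Let smulDr : forall xi x y, L0K K xi ->
  smul xi (add x y) = add (smul xi x) (smul xi y).
Proof. by case: HM => _ []. Qed.
Let smulDl : forall xi eta x, L0K K xi -> L0K K eta ->
  smul (fun w => xi w + eta w) x = add (smul xi x) (smul eta x).
Proof. by case: HM => _ []. Qed.
Let smulA : forall xi eta x, L0K K xi -> L0K K eta ->
  smul (fun w => xi w * eta w) x = smul xi (smul eta x).
Proof. by case: HM => _ []. Qed.
Let smul1 : forall x, smul (fun _ => 1) x = x.
Proof. by case: HM => _ []. Qed.

Lemma addx0 x : add x zero = x.
Proof. by rewrite addC add0x. Qed.

Lemma addI a b c : add a b = add a c -> b = c.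
Proof.
move=> eq_ab_ac; have : add (opp a) (add a b) = add (opp a) (add a c).
  by rewrite eq_ab_ac.
by rewrite !addA [add (opp a) a]addC addxN !add0x.
Qed.

Lemma subx_eq0 a b : add a (opp b) = zero -> a = b.
Proof. by move=> ab0; apply: (@addI (opp b)); rewrite addC ab0 addC addxN. Qed.

Lemma add_idem_eq0 a : add a a = a -> a = zero.
Proof. by move=> aa; apply: (@addI a); rewrite aa addx0. Qed.

Lemma smulx0 xi : L0K K xi -> smul xi zero = zero.
Proof. by move=> Lxi; apply: add_idem_eq0; rewrite -smulDr // add0x. Qed.

Lemma smulxB xi x y : L0K K xi ->
  smul xi (add x (opp y)) = add (smul xi x) (opp (smul xi y)).
Proof.
move=> Lxi; rewrite smulDr //; congr add; apply: (@addI (smul xi y)).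
by rewrite -smulDr // !addxN smulx0.
Qed.

Lemma smul_cst_CM (f g : Omega -> R) x :
  measurable_fun setT f -> measurable_fun setT g ->
  smul (cst_C f) (smul (cst_C g) x) = smul (cst_C (fun w => f w * g w)) x.
Proof.
move=> mf mg; rewrite -smulA ?L0K_cst_C //; congr smul.
by apply/funext => w; rewrite /cst_C rmorphM.
Qed.

Lemma smul_cst_CD (f g : Omega -> R) x :
  measurable_fun setT f -> measurable_fun setT g ->
  add (smul (cst_C f) x) (smul (cst_C g) x) = smul (cst_C (fun w => f w + g w)) x.
Proof.
move=> mf mg; rewrite -smulDl ?L0K_cst_C //; congr smul.
by apply/funext => w; rewrite /cst_C rmorphD.
Qed.

Lemma smul_cst_C0 x : smul (cst_C (fun _ => 0)) x = zero.
Proof.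
apply: add_idem_eq0; rewrite smul_cst_CD; try exact: measurable_cst.
by congr (smul (cst_C _)); apply/funext => w; rewrite addr0.
Qed.

Lemma smul_cst_C1 x : smul (cst_C (fun _ => 1)) x = x.
Proof.
by rewrite -[RHS]smul1; congr smul; apply/funext => w; rewrite /cst_C rmorph1.
Qed.

Lemma L0comb_id (xi : Omega -> R) x : measurable_fun setT xi -> L0comb xi x x = x.
Proof.
move=> mxi; rewrite /L0comb smul_cst_CD //; last exact: measurable_funB.
rewrite -[RHS]smul_cst_C1; congr (smul (cst_C _)).
by apply/funext => w; rewrite addrC subrK.
Qed.

Lemma smul_L0comb (f xi : Omega -> R) x y :
  measurable_fun setT f -> measurable_fun setT xi ->
  smul (cst_C f) (L0comb xi x y) =
  L0comb xi (smul (cst_C f) x) (smul (cst_C f) y).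
Proof.
move=> mf mxi; have m1xi : measurable_fun setT (fun w => 1 - xi w).
  exact: measurable_funB.
rewrite /L0comb smulDr ?L0K_cst_C // !smul_cst_CM //.
by congr add; congr (smul (cst_C _)); apply/funext => w; rewrite mulrC.
Qed.

Lemma smul_indic_L0comb (A B : set Omega) x y :
  measurable A -> measurable B ->
  smul (cst_C \1_A) (L0comb \1_(~` B) x y) =
  add (smul (cst_C \1_(A `\` B)) x) (smul (cst_C \1_(A `&` B)) y).
Proof.
move=> /measurable_indicP mIA /measurableC/measurable_indicP mICB.
have mI1 : measurable_fun setT (fun w => 1 - \1_(~` B) w : R).
  exact: measurable_funB.
rewrite /L0comb smulDr ?L0K_cst_C // !smul_cst_CM //.
by congr add; congr (smul (cst_C _)); apply/funext => w;
  rewrite !indicE ?in_setD ?in_setI in_setC;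
  case: (w \in A); case: (w \in B); rewrite /= ?(mulr0, mul0r, mulr1, subrr, subr0).
Qed.

Lemma L0convex_smul_indic_eq (G : set E) (A : set Omega) (c : E) :
  measurable A -> L0convex P add smul G ->
  L0convex P add smul ([set x | smul (cst_C \1_A) x = c] `&` G).
Proof.
move=> /measurable_indicP mIA convG x y [xc Gx] [yc Gy] xi mxi xi01.
split; last exact: convG.
change (smul (cst_C \1_A) (L0comb xi x y) = c).
by rewrite smul_L0comb // xc yc L0comb_id.
Qed.

Lemma L0convex_finite_concatenation (G : set E) (g : nat -> E)
    (A : nat -> set Omega) :
  L0convex P add smul G -> (exists x, G x) -> (forall n, G (g n)) ->
  (forall n, measurable (A n)) -> trivIset setT A ->
  forall N, exists x, G x /\ forall k, (k < N)%N ->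
    smul (cst_C \1_(A k)) x = smul (cst_C \1_(A k)) (g k).
Proof.
move=> convG [x0 Gx0] Gg mA trivA; elim=> [|N [x [Gx xg]]]; first by exists x0.
have mICA : measurable_fun setT (\1_(~` A N) : Omega -> R).
  exact/measurable_indicP/measurableC.
exists (L0comb \1_(~` A N) x (g N)); split.
  apply: convG => //; apply: aeW => w; rewrite indicE.
  by case: (_ \in _); rewrite ?ler01 ?lexx.
move=> k; rewrite ltnS leq_eqVlt => /orP[/eqP -> | ltkN].
  by rewrite smul_indic_L0comb // setDv setIid indic0 smul_cst_C0 add0x.
have AkN : A k `&` A N = set0.
  apply/seteqP; split => // w [Akw ANw].
  by move: ltkN; rewrite (trivA k N I I) ?ltnn //; exists w.
by rewrite smul_indic_L0comb // setDidl // AkN indic0 smul_cst_C0 addx0 xg.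
Qed.

End L0module.

Section closedness.
Context {d : measure_display} {Omega : measurableType d} {R : realType}.
Variable P : probability Omega R.
Variables (K : scalar_field) (E : Type) (zero : E) (add : E -> E -> E)
  (opp : E -> E) (smul : (Omega -> R[i]) -> E -> E) (Pf : set (E -> Omega -> R)).

Lemma seminorm_smul_indic_le (nrm : E -> Omega -> R) (A : set Omega) (u : E) :
  is_L0seminorm P K add smul nrm -> measurable A ->
  {ae P, forall w, nrm (smul (cst_C \1_A) u) w <= nrm u w}.
Proof.
move=> [_ nrm_ge0 nrm_hom _] mA.
have mIA : measurable_fun setT (\1_A : Omega -> R) by exact: measurable_indic.
have := nrm_hom _ u (L0K_cst_C K mIA); apply: filterS2 (nrm_ge0 u).
move=> w nrmu_ge0 ->.
rewrite /cst_C /cmod indicE /=; case: (w \in A) => /=.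
  by rewrite expr1n expr0n addr0 sqrtr1 mul1r.
by rewrite expr0n addr0 sqrtr0 mul0r.
Qed.

Lemma Ubase_seq1 (nrm : E -> Omega -> R) (eps lam : R) : 0 < eps ->
  Ubase P [:: nrm] eps lam =
  [set x | ((1 - lam)%:E < P [set w | (nrm x w < eps)%R])%E].
Proof.
move=> eps_gt0; apply/funext => x /=; congr (_ < P _)%E; apply/funext => w.
by rewrite /normQ /= bigop.big_cons bigop.big_nil gt_max eps_gt0 andbT.
Qed.

Hypothesis HE : is_RLCmodule P K zero add opp smul Pf.

Lemma el_closed_smul_indic_eq (A : set Omega) (c : E) : measurable A ->
  el_closed P add opp Pf [set x | smul (cst_C \1_A) x = c].
Proof.
move=> mA x /= xAc; have [HM nrmP sepP] := HE.
have mIA : measurable_fun setT (\1_A : Omega -> R) by exact: measurable_indic.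
have LA := L0K_cst_C K mIA.
set w := add c (opp (smul (cst_C \1_A) x)).
have [nrm Pnrm w_neq0] : exists2 nrm, Pf nrm & ~ aeq P (nrm w) (fun _ => 0).
  apply: contrapT => all0; apply: xAc; apply/esym/(subx_eq0 HM)/sepP => nrm Pnrm.
  by apply: contrapT => nz; apply: all0; exists nrm.
have nrm_semi := nrmP _ Pnrm; have [mnrm nrm_ge0 _ _] := nrm_semi.
have [eps eps_gt0 PS_gt0] := exists_level_measure_gt0 (mnrm w) (nrm_ge0 w) w_neq0.
have mS : measurable [set v | eps < nrm w v].
  exact: measurable_ltr (measurable_cst _) (mnrm w).
have [delta PS] : exists delta, P [set v | eps < nrm w v] = delta%:E.
  by exists (fine (P [set v | eps < nrm w v])); rewrite fineK // fin_num_measure.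
have delta_gt0 : 0 < delta by rewrite -lte_fin -PS.
have delta_le1 : delta <= 1 by rewrite -lee_fin -PS probability_le1.
exists (Ubase P [:: nrm] eps (delta / 2)); split.
  exists [:: nrm], eps, (delta / 2); split; split => //.
  - by move=> n0; rewrite mem_seq1 => /eqP ->.
  - by rewrite divr_gt0 //= ltr_pdivrMr // mul1r; lra.
move=> y; rewrite Ubase_seq1 //= => yx_near yAc.
have yx_w : smul (cst_C \1_A) (add y (opp x)) = w by rewrite (smulxB HM) // yAc.
have := seminorm_smul_indic_le (add y (opp x)) nrm_semi mA; rewrite yx_w => le_w.
have := measure_ltr_le_compl eps (mnrm w) (mnrm _) le_w.
rewrite PS => /(lt_le_trans yx_near); rewrite -EFinD lte_fin; lra.
Qed.

End closedness.

Lemma seq_range_bounded (T : eqType) (F : nat -> T) (s : seq T) :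
  (forall X, X \in s -> exists n, X = F n) ->
  exists N, forall X, X \in s -> exists2 n, (n < N)%N & X = F n.
Proof.
elim: s => [|X0 s IH] sF; first by exists 0%N.
have [n0 ->] := sF X0 (mem_head _ _).
have [|N bounded] := IH; first by move=> X Xs; apply: sF; rewrite in_cons Xs orbT.
exists (maxn N n0.+1) => X; rewrite in_cons => /orP[/eqP -> | /bounded[n ltnN ->]].
  by exists n0; rewrite // leq_max leqnn orbT.
by exists n; rewrite // leq_max ltnN.
Qed.

Section compactness.
Context {d : measure_display} {Omega : measurableType d} {R : realType}.
Variable P : probability Omega R.
Variables (E : Type) (add : E -> E -> E) (opp : E -> E)
  (smul : (Omega -> R[i]) -> E -> E) (Pf : set (E -> Omega -> R)).

Lemma L0convexly_compact_bigcap_nat (G : set E) (C : nat -> set E) :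
  L0convexly_compact P add opp smul Pf G ->
  (forall n, L0convex P add smul (C n `&` G)) ->
  (forall n, el_closed P add opp Pf (C n)) ->
  (forall N, exists x, G x /\ forall k, (k < N)%N -> C k x) ->
  exists x, G x /\ forall n, C n x.
Proof.
move=> [_ compactG] convC closedC finC.
pose Fam := range (fun n => C n `&` G).
have FamP X : Fam X ->
    [/\ X `<=` G, L0convex P add smul X & rel_closed P add opp Pf G X].
  by case=> n _ <-; split; [exact: subIsetr | exact: convC | exists (C n)].
have Fam_fip (s : seq (set E)) :
    (forall X, X \in s -> Fam X) -> exists x, forall X, X \in s -> X x.
  move=> sFam; have sC X : X \in s -> exists n, X = C n `&` G.
    by move=> /sFam[n _ <-]; exists n.
  have [N bounded] := seq_range_bounded sC.
  have [x [Gx xC]] := finC N.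
  by exists x => X /bounded[n ltnN ->]; split => //; apply: xC.
have [x [Gx FamX]] := compactG Fam FamP Fam_fip.
by exists x; split => // n; have [] := FamX (C n `&` G) (ex_intro2 _ _ n I erefl).
Qed.

End compactness.

Theorem proposition4p1 (d : measure_display) (Omega : measurableType d)
  (R : realType) (P : probability Omega R) (K : scalar_field)
  (E : Type) (zero : E) (add : E -> E -> E) (opp : E -> E)
  (smul : (Omega -> R[i]) -> E -> E) (Pf : set (E -> Omega -> R))
  (HE : is_RLCmodule P K zero add opp smul Pf)
  (G : set E) (G_nonempty : exists g, G g)
  (G_convex : L0convex P add smul G)
  (G_compact : L0convexly_compact P add opp smul Pf G) :
  countable_concatenation smul G.
Proof.
move=> g Gg A mA trivA _.
have [HM _ _] := HE.
pose C n := [set x | smul (cst_C \1_(A n)) x = smul (cst_C \1_(A n)) (g n)].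
apply: (L0convexly_compact_bigcap_nat (C := C) G_compact).
- by move=> n; apply: (L0convex_smul_indic_eq HM).
- by move=> n; apply: (el_closed_smul_indic_eq HE).
- exact: (L0convex_finite_concatenation HM).
Qed.
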